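(* Let $x, y, p \in \mathbb{Z}$ with $p \geq 3$ a prime such that $x^2 - 2 = y^p$. Then there exist $a, b, r \in \mathbb{Z}$ with $|r| \leq \frac{p-1}{2}$ such that $$x + \sqrt{2} = (1+\sqrt{2})^r (a + b\sqrt{2})^p.$$ Hence the integers $a, b$ satisfy $$\frac{1}{2\sqrt{2}}\left((1+\sqrt{2})^r (a+b\sqrt{2})^p - (1-\sqrt{2})^r (a - b\sqrt{2})^p\right) = 1.$$ *)

From mathcomp Require Export all_boot all_order all_algebra.
From mathcomp Require Export reals.
Export Order.TTheory GRing.Theory Num.Theory.
Local Open Scope ring_scope.

Definition sqrt2 {R : realType} : R := Num.sqrt 2.

From HB Require Import structures.
From mathcomp Require Import all_boot all_order all_algebra reals.
From mathcomp Require Import zify ring.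
Import Order.TTheory GRing.Theory Num.Theory.

Set Implicit Arguments.
Unset Strict Implicit.
Unset Printing Implicit Defensive.

Local Open Scope ring_scope.

(* In Z[√2], which is norm-Euclidean and hence a Bezout domain, the equation
   reads (x + √2)(x - √2) = y^p.  It forces x^2 - 2 to be odd, so a common
   divisor of the two factors has a norm dividing both -8 and x^2 - 2: the
   factors are coprime and x + √2 is a unit times a p-th power.  Units are
   ±(1 + √2)^k; writing k = qp + r with |r| <= (p - 1)/2, the sign (p is odd)
   and (1 + √2)^(qp) go into the p-th power.  Embedding into the reals, and
   doing the same for the conjugate, gives both identities. *)

Section Comaximal.
Variable R : comPzRingType.
Implicit Types a b d g : R.

Definition dvdr d a := exists k, a = k * d.
Definition comaximal a b := exists u v, u * a + v * b = 1.

Lemma dvdr_exp2r d g n : dvdr d g -> dvdr (d ^+ n) (g ^+ n).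
Proof. by move=> [k ->]; exists (k ^+ n); rewrite exprMn. Qed.

Lemma comaximal_dvdl d a b : dvdr d a -> comaximal a b -> comaximal d b.
Proof. by move=> [k ->] [u [v uv1]]; exists (u * k), v; rewrite -mulrA. Qed.

Lemma comaximalXl a b n : comaximal a b -> comaximal (a ^+ n) b.
Proof.
move=> [u [v uv1]]; elim: n => [|n [u' [v' uv1']]].
  by exists 1, 0; rewrite mul0r addr0 mulr1.
exists (u * u'), (v * v' * b + v * u' * a ^+ n + u * a * v').
transitivity ((u * a + v * b) * (u' * a ^+ n + v' * b)); first by rewrite exprS; ring.
by rewrite uv1 uv1' mulr1.
Qed.

Lemma comaximal_dvd_mulr d a b : comaximal d b -> dvdr d (a * b) -> dvdr d a.
Proof.
move=> [u [v uv1]] [k abk]; exists (a * u + v * k).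
transitivity (a * (u * d + v * b)); first by rewrite uv1 mulr1.
transitivity (a * u * d + v * (a * b)); first ring.
by rewrite abk; ring.
Qed.

End Comaximal.

Lemma comaximal_mul_expr (R : idomainType) (a b g d s t : R) n :
  a != 0 -> comaximal a b -> a * b = g ^+ n ->
  dvdr d a -> dvdr d g -> s * a + t * g = d ->
  exists2 e, e \is a GRing.unit & a = e * d ^+ n.
Proof.
move=> a0 ab1 abg da dg bez.
have [m a_eq] : dvdr (d ^+ n) a.
  apply: comaximal_dvd_mulr (comaximalXl n (comaximal_dvdl da ab1)) _.
  by rewrite abg; apply: dvdr_exp2r.
have [m' dn_eq] : dvdr a (d ^+ n).
  exists (s * \sum_(i < n) d ^+ (n.-1 - i) * (t * g) ^+ i + t ^+ n * b).
  rewrite -[LHS](subrK ((t * g) ^+ n)) subrXX exprMn -abg.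
  have -> : d - t * g = s * a by rewrite -bez addrK.
  ring.
exists m => //; apply/unitrPr; exists m'.
by apply: (mulIf a0); rewrite mul1r -mulrA -dn_eq -a_eq.
Qed.

Lemma sqrt2_irrational (a b : int) : a ^+ 2 = 2 * b ^+ 2 -> b = 0.
Proof.
move=> /(congr1 absz); rewrite abszM !abszX /= => e.
case: (posnP `|b|%N) => [|b_gt0]; first lia.
have a_gt0 : (0 < `|a|)%N by nia.
(* The 2-adic valuation is even on the left and odd on the right. *)
have := congr1 (logn 2) e.
rewrite lognM ?expn_gt0 ?b_gt0 // !lognX (@logn_prime 2 2) //=; lia.
Qed.

Lemma divz_nearest (w n : int) : n != 0 -> exists q, 2 * `|w - q * n| <= `|n|.
Proof.
move=> n0; have w_eq := divz_eq w n.
have r_ge0 := modz_ge0 w n0; have r_lt := ltz_mod w n0.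
set q := (w %/ n)%Z in w_eq; set r := (w %% n)%Z in w_eq r_ge0 r_lt.
have [r_small|r_big] := lerP (2 * r) `|n|; first by exists q; lia.
by case: (ltrP 0 n) => n_sign; [exists (q + 1) | exists (q - 1)]; lia.
Qed.

Lemma dvdz_pow2_odd_unit (d m : int) k :
  (d %| 2 ^+ k)%Z -> (d %| m)%Z -> ~~ (2 %| m)%Z -> d \is a GRing.unit.
Proof.
rewrite !dvdzE abszX => /(dvdn_pfactor _ _ (isT : prime 2)) [[|j] _ d_eq] dm.
  by move=> _; apply/pred2P; lia.
by case/negP; rewrite (dvdn_trans _ dm) // d_eq expnS dvdn_mulr.
Qed.

Lemma Euclid_dvdz2X (m : int) n : (0 < n)%N -> (2 %| m ^+ n)%Z = (2 %| m)%Z.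
Proof. by move=> n_gt0; rewrite !dvdzE abszX Euclid_dvdX // n_gt0 andbT. Qed.

Lemma sqr_sub2_expr_odd (x y : int) n :
  (2 <= n)%N -> x ^+ 2 - 2 = y ^+ n -> ~~ (2 %| x ^+ 2 - 2)%Z.
Proof.
move=> n_ge2 xy_eq; apply/negP => /dvdzP [c c_eq].
have /dvdzP [t x_eq] : (2 %| x)%Z.
  by rewrite -(Euclid_dvdz2X _ (isT : 0 < 2)%N); apply/dvdzP; exists (c + 1); nia.
have /dvdzP [u y_eq] : (2 %| y)%Z.
  by rewrite -(Euclid_dvdz2X _ (ltnW n_ge2)) -xy_eq; apply/dvdzP; exists c.
have /dvdzP [v] : (4 %| y ^+ n)%Z.
  by rewrite y_eq -(subnK n_ge2) exprD exprMn dvdz_mull // exprMn dvdz_mull.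
rewrite -xy_eq x_eq; nia.
Qed.

Record zsqrt2 := ZSqrt2 { zre : int; zim : int }.

Definition zsqrt2_pair z := (zre z, zim z).
Definition pair_zsqrt2 (p : int * int) := ZSqrt2 p.1 p.2.
Lemma zsqrt2_pairK : cancel zsqrt2_pair pair_zsqrt2. Proof. by case. Qed.
HB.instance Definition _ := Countable.copy zsqrt2 (can_type zsqrt2_pairK).

Lemma zsqrt2_eq (z w : zsqrt2) : zre z = zre w -> zim z = zim w -> z = w.
Proof. by case: z w => a b [c d] /= -> ->. Qed.

Definition zadd z w := ZSqrt2 (zre z + zre w) (zim z + zim w).
Definition zopp z := ZSqrt2 (- zre z) (- zim z).
Definition zmul z w :=
  ZSqrt2 (zre z * zre w + 2 * zim z * zim w) (zre z * zim w + zim z * zre w).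

Ltac zsqrt2_ring := move=> *; apply: zsqrt2_eq => /=; ring.

Lemma zaddA : associative zadd. Proof. zsqrt2_ring. Qed.
Lemma zaddC : commutative zadd. Proof. zsqrt2_ring. Qed.
Lemma zadd0 : left_id (ZSqrt2 0 0) zadd. Proof. zsqrt2_ring. Qed.
Lemma zaddN : left_inverse (ZSqrt2 0 0) zopp zadd. Proof. zsqrt2_ring. Qed.
HB.instance Definition _ := GRing.isZmodule.Build zsqrt2 zaddA zaddC zadd0 zaddN.

Lemma zmulA : associative zmul. Proof. zsqrt2_ring. Qed.
Lemma zmulC : commutative zmul. Proof. zsqrt2_ring. Qed.
Lemma zmul1 : left_id (ZSqrt2 1 0) zmul. Proof. zsqrt2_ring. Qed.
Lemma zmulDl : left_distributive zmul +%R. Proof. zsqrt2_ring. Qed.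
Lemma zone_neq0 : ZSqrt2 1 0 != 0. Proof. by []. Qed.
HB.instance Definition _ :=
  GRing.Zmodule_isComNzRing.Build zsqrt2 zmulA zmulC zmul1 zmulDl zone_neq0.

Lemma zsqrt2_intE (n : int) : n%:~R = ZSqrt2 n 0.
Proof.
have natE m : m%:R = ZSqrt2 m 0.
  elim: m => // m IH; rewrite -addn1 natrD IH.
  by apply: zsqrt2_eq; rewrite /= ?addr0 // PoszD.
by case: n => m; rewrite ?NegzE ?mulrNz -pmulrn natE.
Qed.

Definition znorm z := zre z ^+ 2 - 2 * zim z ^+ 2.
Definition zconj z := ZSqrt2 (zre z) (- zim z).

Lemma znormM : {morph znorm : z w / z * w}.
Proof. by move=> [a b] [c d]; rewrite /znorm /=; ring. Qed.

Lemma mul_zconj z : z * zconj z = (znorm z)%:~R.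
Proof. by rewrite zsqrt2_intE; apply: zsqrt2_eq; rewrite /= /znorm; ring. Qed.

Lemma znorm_eq0 z : (znorm z == 0) = (z == 0).
Proof.
apply/eqP/eqP => [|->] //; case: z => a b; rewrite /znorm /= => /eqP.
rewrite subr_eq0 => /eqP ab; have b0 := sqrt2_irrational ab.
by move: ab; rewrite b0 expr0n mulr0 => /eqP; rewrite sqrf_eq0 => /eqP ->.
Qed.

Definition zunit := [pred z | znorm z \is a GRing.unit].
Definition zinv z := if z \in zunit then (znorm z)%:~R * zconj z else z.

Lemma zmulV : {in zunit, left_inverse 1 zinv *%R}.
Proof.
(* In [int] every unit is its own inverse. *)
move=> z Uz; rewrite /zinv Uz -mulrA (mulrC _ z) mul_zconj -intrM.
by rewrite -[X in X * _]/((znorm z)^-1) mulVr.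
Qed.

Lemma zunitPl z w : w * z = 1 -> z \in zunit.
Proof.
move=> /(congr1 znorm); rewrite znormM => wz1.
by apply/unitrPr; exists (znorm w); rewrite mulrC.
Qed.

Lemma zinv_out : {in [predC zunit], zinv =1 id}.
Proof. by move=> z /negPf Uz; rewrite /zinv Uz. Qed.

HB.instance Definition _ :=
  GRing.ComNzRing_hasMulInverse.Build zsqrt2 zmulV zunitPl zinv_out.

Lemma zsqrt2_unitE z : (z \is a GRing.unit) = (znorm z \is a GRing.unit).
Proof. by []. Qed.

Lemma zsqrt2_mul_eq0 (z w : zsqrt2) : z * w = 0 -> (z == 0) || (w == 0).
Proof.
by move/(congr1 znorm); rewrite znormM => /eqP; rewrite mulf_eq0 !znorm_eq0.
Qed.

HB.instance Definition _ := GRing.ComUnitRing_isIntegral.Build zsqrt2 zsqrt2_mul_eq0.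

Lemma zsqrt2_euclid (a b : zsqrt2) : b != 0 ->
  exists q, `|znorm (a - q * b)| < `|znorm b|.
Proof.
(* Round the coordinates of a * zconj b / znorm b to the nearest integers. *)
rewrite -znorm_eq0 => nb0; set w := a * zconj b.
have [q1 le1] := divz_nearest (zre w) nb0.
have [q2 le2] := divz_nearest (zim w) nb0.
exists (ZSqrt2 q1 q2).
have : znorm (a - ZSqrt2 q1 q2 * b) * znorm b =
    (zre w - q1 * znorm b) ^+ 2 - 2 * (zim w - q2 * znorm b) ^+ 2.
  by case: a b {le1 le2 nb0} @w => [a1 a2] [b1 b2]; rewrite /znorm /=; ring.
nia.
Qed.

Lemma zsqrt2_bezout (a b : zsqrt2) :
  exists d u v, [/\ dvdr d a, dvdr d b & u * a + v * b = d].
Proof.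
have [n] := ubnP `|znorm b|; elim: n a b => // n IH a b; rewrite ltnS => le_b_n.
have [->|b0] := eqVneq b 0.
  by exists a, 1, 0; split; [exists 1 | exists 0 | ]; rewrite ?mul1r ?mul0r ?addr0.
have [q lt_r_b] := zsqrt2_euclid a b0.
have [d [u [v [[k b_eq] [l r_eq] bez]]]] := IH b (a - q * b) ltac:(lia).
exists d, v, (u - v * q); split; last by rewrite -bez; ring.
- by exists (l + q * k); rewrite mulrDl -mulrA -b_eq -r_eq; ring.
- by exists k.
Qed.

Definition eps : zsqrt2 := ZSqrt2 1 1.

Lemma eps_unit : eps \is a GRing.unit. Proof. by []. Qed.

Lemma eps_inv : eps^-1 = ZSqrt2 (-1) 1.
Proof. by apply: (mulrI eps_unit); rewrite mulrV ?eps_unit //; apply: zsqrt2_eq. Qed.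

Lemma zsqrt2_unitP z :
  z \is a GRing.unit -> exists (s : bool) (k : int), z = (-1) ^+ s * eps ^ k.
Proof.
have [n] := ubnP `|zim z|; elim: n z => // n IH [a b].
rewrite ltnS /= => le_b_n Uz.
have nab : a ^+ 2 - 2 * b ^+ 2 = 1 \/ a ^+ 2 - 2 * b ^+ 2 = -1.
  by move: Uz; rewrite zsqrt2_unitE => /pred2P[]; [left | right].
(* Multiplying by eps or eps^-1 makes |zim z| smaller. *)
have descend (c : int) z' :
    c = 1 \/ c = -1 -> (`|zim z'| < `|b|)%N -> ZSqrt2 a b = z' * eps ^ c ->
    exists (s : bool) (k : int), ZSqrt2 a b = (-1) ^+ s * eps ^ k.
  move=> c_sign lt_z'_b z_eq.
  have Uz' : z' \is a GRing.unit by rewrite -(unitrMl _ (unitrXz c eps_unit)) -z_eq.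
  have [s [k z'_eq]] := IH z' ltac:(lia) Uz'.
  by exists s, (k + c); rewrite z_eq z'_eq exprzDr ?eps_unit // mulrA.
have [b0|b_neq0] := eqVneq b 0.
  have [->|->] : a = 1 \/ a = -1 by rewrite b0 in nab; nia.
    by exists false, 0; rewrite b0.
  by exists true, 0; rewrite b0.
have [ab_pos|ab_neg] := lerP 0 (a * b).
- apply: (descend 1 (ZSqrt2 (2 * b - a) (a - b))); [by left | by rewrite /=; nia|].
  by apply: zsqrt2_eq; rewrite /= ?mulr1; ring.
- apply: (descend (-1) (ZSqrt2 (a + 2 * b) (a + b))); [by right | by rewrite /=; nia|].
  by rewrite exprN1 eps_inv; apply: zsqrt2_eq => /=; ring.
Qed.

Lemma dvdr_znorm (d z : zsqrt2) : dvdr d z -> (znorm d %| znorm z)%Z.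
Proof. by move=> [k ->]; rewrite znormM dvdz_mull. Qed.

Lemma comaximal_add_sub_sqrt2 (x : int) :
  ~~ (2 %| x ^+ 2 - 2)%Z -> comaximal (ZSqrt2 x 1) (ZSqrt2 x (-1)).
Proof.
move=> norm_odd.
have [g [u [v [[k a_eq] [l b_eq] bez]]]] :=
  zsqrt2_bezout (ZSqrt2 x 1) (ZSqrt2 x (-1)).
have g_8 : (znorm g %| 2 ^+ 3)%Z.
  have : dvdr g (ZSqrt2 0 2).
    by exists (k - l); rewrite mulrBl -a_eq -b_eq; apply: zsqrt2_eq => /=; ring.
  by move/dvdr_znorm; rewrite dvdzE.
have g_odd : (znorm g %| x ^+ 2 - 2)%Z by apply: (dvdr_znorm (ex_intro _ k a_eq)).
have Ug : g \is a GRing.unit.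
  by rewrite zsqrt2_unitE (dvdz_pow2_odd_unit g_8 g_odd norm_odd).
by exists (g^-1 * u), (g^-1 * v); rewrite -!mulrA -mulrDr bez mulVr.
Qed.

Lemma add_sqrt2_unit_mul_expr (x y : int) n :
  (1 < n)%N -> x ^+ 2 - 2 = y ^+ n ->
  exists e d, e \is a GRing.unit /\ ZSqrt2 x 1 = e * d ^+ n.
Proof.
move=> n_gt1 xy_eq; set a := ZSqrt2 x 1.
have a_neq0 : a != 0 by apply/eqP => /(congr1 zim).
have a_conj : a * zconj a = y%:~R ^+ n.
  by rewrite mul_zconj -rmorphXn /= -xy_eq /znorm /= expr1n mulr1.
have a_coprime := comaximal_add_sub_sqrt2 (sqr_sub2_expr_odd n_gt1 xy_eq).
have [d [s [t [d_a d_y bez]]]] := zsqrt2_bezout a y%:~R.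
have [e Ue a_eq] := comaximal_mul_expr a_neq0 a_coprime a_conj d_a d_y bez.
by exists e, d.
Qed.

Lemma unit_mul_expr_reduce (e d : zsqrt2) p : odd p -> e \is a GRing.unit ->
  exists r D, `|r| <= ((p - 1) %/ 2)%N%:Z /\ e * d ^+ p = eps ^ r * D ^+ p.
Proof.
move=> p_odd Ue; have [s [k ->]] := zsqrt2_unitP Ue.
have p_neq0 : p%:Z != 0 by case: p p_odd.
have [q r_small] := divz_nearest k p_neq0.
exists (k - q * p), ((-1) ^+ s * eps ^ q * d); split.
  have : (p %% 2 = 1)%N by rewrite modn2 p_odd.
  lia.
have sign_p : ((-1) ^+ s) ^+ p = (-1) ^+ s :> zsqrt2.
  by rewrite exprAC -signr_odd p_odd.
rewrite !exprMn sign_p [(eps ^ q) ^+ p]exprnP exprz_exp.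
have -> : eps ^ k = eps ^ (k - q * p) * eps ^ (q * p).
  by rewrite -exprzDr ?eps_unit // subrK.
by rewrite mulrCA !mulrA.
Qed.

Lemma zconj_is_zmod_morphism : zmod_morphism zconj.
Proof. by move=> z w; apply: zsqrt2_eq => /=; ring. Qed.

Lemma zconj_is_monoid_morphism : monoid_morphism zconj.
Proof. by split=> [|z w]; apply: zsqrt2_eq => /=; ring. Qed.

HB.instance Definition _ :=
  GRing.isZmodMorphism.Build _ _ zconj zconj_is_zmod_morphism.
HB.instance Definition _ :=
  GRing.isMonoidMorphism.Build _ _ zconj zconj_is_monoid_morphism.

Definition zsqrt2_emb (R : realType) (z : zsqrt2) : R :=
  (zre z)%:~R + (zim z)%:~R * sqrt2.

Lemma sqrt2_sqr (R : realType) : sqrt2 ^+ 2 = 2 :> R.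
Proof. by rewrite sqr_sqrtr // ler0n. Qed.

Lemma zsqrt2_emb_is_zmod_morphism R : zmod_morphism (zsqrt2_emb R).
Proof. by move=> z w; rewrite /zsqrt2_emb /= !intrD !intrN; ring. Qed.

Lemma zsqrt2_emb_is_monoid_morphism R : monoid_morphism (zsqrt2_emb R).
Proof.
split=> [|z w]; first by rewrite /zsqrt2_emb /= mul0r addr0.
rewrite /zsqrt2_emb /= !(intrD, intrM); apply/eqP; rewrite -subr_eq0; apply/eqP.
transitivity ((zim z)%:~R * (zim w)%:~R * (2 - sqrt2 ^+ 2) : R); first ring.
by rewrite sqrt2_sqr subrr mulr0.
Qed.

HB.instance Definition _ R :=
  GRing.isZmodMorphism.Build _ _ (zsqrt2_emb R) (zsqrt2_emb_is_zmod_morphism R).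
HB.instance Definition _ R :=
  GRing.isMonoidMorphism.Build _ _ (zsqrt2_emb R) (zsqrt2_emb_is_monoid_morphism R).

Lemma zsqrt2_emb_eps_mul_expr (R : realType) r (D : zsqrt2) n :
  zsqrt2_emb R (eps ^ r * D ^+ n) =
    (1 + sqrt2) ^ r * ((zre D)%:~R + (zim D)%:~R * sqrt2) ^+ n /\
  zsqrt2_emb R (zconj (eps ^ r * D ^+ n)) =
    (1 - sqrt2) ^ r * ((zre D)%:~R - (zim D)%:~R * sqrt2) ^+ n.
Proof.
have emb_eps : zsqrt2_emb R eps = 1 + sqrt2 by rewrite /zsqrt2_emb /= mul1r.
have emb_eps' : zsqrt2_emb R (zconj eps) = 1 - sqrt2.
  by rewrite /zsqrt2_emb /= mulN1r.
have emb_D' : zsqrt2_emb R (zconj D) = (zre D)%:~R - (zim D)%:~R * sqrt2.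
  by rewrite /zsqrt2_emb /= intrN mulNr.
have Ueps' : zconj eps \is a GRing.unit by [].
rewrite !rmorphM !rmorphXn !rmorphXz ?eps_unit //.
by split; congr (_ ^ r * _ ^+ n); [exact: emb_eps | exact: emb_eps' | exact: emb_D'].
Qed.

Theorem theorem3p1 (R : realType) (x y : int) (p : nat) :
  prime p -> (3 <= p)%N -> x ^+ 2 - 2 = y ^+ p ->
  exists a b r : int,
    `|r| <= ((p - 1) %/ 2)%N%:Z /\
    (x%:~R + sqrt2 = (1 + sqrt2) ^ r * (a%:~R + b%:~R * sqrt2) ^+ p :> R) /\
    ((2 * sqrt2)^-1 * ((1 + sqrt2) ^ r * (a%:~R + b%:~R * sqrt2) ^+ p
                       - (1 - sqrt2) ^ r * (a%:~R - b%:~R * sqrt2) ^+ p) = 1 :> R).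
Proof.
move=> p_prime p_ge3 xy_eq.
have p_odd : odd p by case: (even_prime p_prime) p_ge3 => [->|].
have [e [d [Ue a_eq]]] := add_sqrt2_unit_mul_expr (ltnW p_ge3) xy_eq.
have [r [D [r_small eD]]] := unit_mul_expr_reduce d p_odd Ue.
have [emb_a emb_a'] := zsqrt2_emb_eps_mul_expr R r D p.
rewrite -eD -a_eq /zsqrt2_emb /= rmorph1 rmorphN1 mul1r mulN1r in emb_a emb_a'.
exists (zre D), (zim D), r; rewrite -emb_a -emb_a'; do 2!split => //.
have two_sqrt2_neq0 : 2 * sqrt2 != 0 :> R.
  by rewrite mulf_neq0 ?pnatr_eq0 // gt_eqF // sqrtr_gt0 ltr0n.
by rewrite (_ : _ - _ = 2 * sqrt2) ?mulVf //; ring.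
Qed.
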